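(* Let $\bar A_t=\frac1{t+1}\sum_{k=0}^tr_k$ be the running average of the observed rewards, $\hat V_t=\bar A_t/(1-\gamma)$, and $\bar V=\pi^TV$ the mean of the true value function. Let $t_0$ be the largest integer satisfying $t_0\le2\tau^{\rm mix}\big(\frac1{2(t_0+1)}\big)$. Then for all $t>t_0$, $$E\big[(\hat V_t-\bar V)^2\big]\le O\!\left(\frac{r_{\max}^2\,\tau^{\rm mix}\big(\frac1{2(t+1)}\big)}{(1-\gamma)^2\,t}\right),$$ where the implied constant is absolute.
   Context: Setting: finite state space $\mathcal S=[n]$, finite action set, fixed policy $\mu$ inducing an irreducible aperiodic transition matrix $P$ with stationary distribution $\pi$; rewards deterministic with $|r(s,a,s')|\le r_{\max}$; discount $\gamma\in(0,1)$. The true value function $V\in\mathbb{R}^n$ is $V(s)=E_{\mu,s}[\sum_{t\ge0}\gamma^tr_{t+1}]$, equivalently $V=(I-\gamma P)^{-1}R$ with $R(s)=\sum_{s'}\sum_a\mu(s,a)P(s'|s,a)r(s,a,s')$. Mixing: there are $m>0$, $\rho\in(0,1)$ with $\sup_sd_{TV}(P^t(s,\cdot),\pi)\le m\rho^t$ for all $t\ge0$; $\tau^{\rm mix}(\epsilon)=\min\{t\in\mathbb N,t\ge1:m\rho^t\le\epsilon\}$. Observations: a single trajectory with $s_0\sim\pi$, $a_t\sim\mu(s_t,\cdot)$, $s_{t+1}$ from the MDP transition, $r_t=r(s_t,a_t,s_{t+1})$. *)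

From HB Require Import structures.
From mathcomp Require Import all_boot all_order all_algebra.
From mathcomp Require Import boolp reals.
Set Implicit Arguments. Unset Strict Implicit. Unset Printing Implicit Defensive.
Import Order.TTheory GRing.Theory Num.Theory.
Local Open Scope ring_scope.

Section MRP.
Variables (R : realType) (n : nat) (A : finType).

Definition trans_mx (mu : 'I_n -> A -> R) (Pm : 'I_n -> A -> 'I_n -> R) : 'M[R]_n :=
  \matrix_(s, s') \sum_(a : A) mu s a * Pm s a s'.

Definition rew_vec (mu : 'I_n -> A -> R) (Pm : 'I_n -> A -> 'I_n -> R)
  (r : 'I_n -> A -> 'I_n -> R) : 'cV[R]_n :=
  \col_s \sum_(s' < n) \sum_(a : A) mu s a * Pm s a s' * r s a s'.

Definition value_fun mu Pm r (gamma : R) : 'cV[R]_n :=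
  invmx (1%:M - gamma *: trans_mx mu Pm) *m rew_vec mu Pm r.

Definition mean_value (pi : 'I_n -> R) mu Pm r gamma : R :=
  \sum_(s < n) pi s * value_fun mu Pm r gamma s 0.

Definition is_distr (p : 'I_n -> R) := (forall s, 0 <= p s) /\ \sum_(s < n) p s = 1.

Definition stationary (P : 'M[R]_n) (pi : 'I_n -> R) :=
  is_distr pi /\ forall s', \sum_(s < n) pi s * P s s' = pi s'.

Definition irreducible (P : 'M[R]_n) :=
  forall s s' : 'I_n, exists t : nat, 0 < (P ^+ t) s s'.

(* every state has period 1: the gcd of its return times is 1 *)
Definition aperiodic (P : 'M[R]_n) :=
  forall (s : 'I_n) (d : nat),
    (forall t : nat, (0 < t)%N -> 0 < (P ^+ t) s s -> (d %| t)%N) -> d = 1%N.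

Definition dTV (p q : 'I_n -> R) : R := 2^-1 * \sum_(s < n) `|p s - q s|.

Definition geom_mixing (P : 'M[R]_n) (pi : 'I_n -> R) (m rho : R) :=
  forall (t : nat) (s : 'I_n), dTV (fun s' => (P ^+ t) s s') pi <= m * rho ^+ t.

End MRP.

(* tau^mix(eps) = min { t in N, t >= 1 : m rho^t <= eps } (0 if the set is empty) *)
Definition tau_mix (R : realType) (m rho eps : R) : nat :=
  match pselect (exists t : nat, `[< (1 <= t)%N /\ m * rho ^+ t <= eps >]) with
  | left h => ex_minn h
  | right _ => 0%N
  end.

Section Traj.
Variables (R : realType) (n : nat) (A : finType) (t : nat).

(* a trajectory up to time t: states s_0..s_{t+1}, actions a_0..a_t *)
Definition traj := ({ffun 'I_t.+2 -> 'I_n} * {ffun 'I_t.+1 -> A})%type.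

Definition st (w : traj) (k : nat) : 'I_n := w.1 (inord k).
Definition ac (w : traj) (k : nat) : A := w.2 (inord k).

Definition traj_prob (pi : 'I_n -> R) (mu : 'I_n -> A -> R)
  (Pm : 'I_n -> A -> 'I_n -> R) (w : traj) : R :=
  pi (st w 0) * \prod_(k < t.+1) (mu (st w k) (ac w k) * Pm (st w k) (ac w k) (st w k.+1)).

Definition obs_rew (r : 'I_n -> A -> 'I_n -> R) (w : traj) (k : nat) : R :=
  r (st w k) (ac w k) (st w k.+1).

Definition run_avg r (w : traj) : R := (t.+1%:R)^-1 * \sum_(k < t.+1) obs_rew r w k.

Definition Vhat r (gamma : R) (w : traj) : R := run_avg r w / (1 - gamma).

Definition mse pi mu Pm r gamma : R :=
  \sum_(w : traj) traj_prob pi mu Pm w * (Vhat r gamma w - mean_value pi mu Pm r gamma) ^+ 2.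

End Traj.

(* Let a0 = pi^T R be the stationary mean one-step reward.  Since a stationary
   distribution is a left eigenvector of the resolvent (1 - gamma P)^-1, the
   mean value is bar V = a0 / (1 - gamma), hence
     hat V_t - bar V = ((t+1)(1-gamma))^-1 * sum_k (r_k - a0),
   and the MSE is ((t+1)(1-gamma))^-2 times the double sum of the cross
   moments E[(r_j - a0)(r_k - a0)].  Expanding the trajectory law as a path
   sum, such a cross moment for j < k equals pi^T D P^(k-j-1) w, where D is the
   transition matrix weighted by the centered reward and w = D 1 has pi-mean
   zero.  It is thus O(rmax^2) always, and O(rmax^2 eps) once k - j - 1 >= tau,
   by geometric mixing.  At most (2 tau + 1)(t + 1) pairs are close, which
   with eps = 1/(2(t+1)) gives the rate 32 rmax^2 tau / ((1-gamma)^2 t). *)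
From HB Require Import structures.
From mathcomp Require Import all_boot all_order all_algebra.
From mathcomp Require Import boolp reals zify ring lra.
Import Order.TTheory GRing.Theory Num.Theory.
Local Open Scope ring_scope.
Set Implicit Arguments. Unset Strict Implicit. Unset Printing Implicit Defensive.

Definition ffun_cons (T : finType) N (s : T) (y : {ffun 'I_N -> T}) : {ffun 'I_N.+1 -> T} :=
  [ffun i => if unlift ord0 i is Some j then y j else s].

Lemma ffun_cons0 (T : finType) N (s : T) (y : {ffun 'I_N -> T}) :
  ffun_cons s y (inord 0) = s.
Proof.
have -> : (inord 0 : 'I_N.+1) = ord0 by apply: val_inj; rewrite /= inordK.
by rewrite ffunE unlift_none.
Qed.

Lemma ffun_consS (T : finType) N (s : T) (y : {ffun 'I_N.+1 -> T}) k :
  (k < N.+1)%N -> ffun_cons s y (inord k.+1) = y (inord k).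
Proof.
move=> lt_k; have -> : (inord k.+1 : 'I_N.+2) = lift ord0 (inord k).
  by apply: val_inj; rewrite /= /bump /= inordK // inordK.
by rewrite ffunE liftK.
Qed.

Lemma sum_ffun_cons (V : nmodType) (T : finType) N (F : {ffun 'I_N.+1 -> T} -> V) :
  \sum_x F x = \sum_(s : T) \sum_(y : {ffun 'I_N -> T}) F (ffun_cons s y).
Proof.
rewrite pair_big /= (reindex (fun p : T * {ffun 'I_N -> T} => ffun_cons p.1 p.2)) //=.
exists (fun x => (x ord0, [ffun j => x (lift ord0 j)])) => [[s y] _ | x _] /=.
- congr pair; first by rewrite ffunE unlift_none.
  by apply/ffunP => j; rewrite !ffunE liftK.
- by apply/ffunP => i; rewrite ffunE; case: unliftP => [j ->|->]; rewrite ?ffunE.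
Qed.

(* There is exactly one function on the empty domain. *)
Lemma sum_ffun_nil (V : nmodType) (T : finType) (F : {ffun 'I_0 -> T} -> V)
    (y0 : {ffun 'I_0 -> T}) :
  \sum_y F y = F y0.
Proof. by rewrite (big_pred1 y0) // => y /=; apply/esym/eqP/ffunP => -[]. Qed.

Section PathSums.
Variables (R : comPzRingType) (n : nat).

Definition mxapp (M : 'M[R]_n) (v : 'I_n -> R) : 'I_n -> R :=
  fun s => \sum_(s' < n) M s s' * v s'.

Fixpoint chain (F : nat -> ('I_n -> R) -> ('I_n -> R)) (i N : nat) (v : 'I_n -> R) :=
  if N is N'.+1 then F i (chain F i.+1 N' v) else v.

Lemma chain_split F N1 N2 i v :
  chain F i (N1 + N2) v = chain F i N1 (chain F (i + N1) N2 v).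
Proof.
elim: N1 i => [|N1 IH] i /=; first by rewrite addn0.
by rewrite IH addSnnS.
Qed.

Lemma chain_const F G i N v :
  (forall k, (i <= k < i + N)%N -> F k = G) -> chain F i N v = iter N G v.
Proof.
elim: N i => [//|N IH] i eqFG /=.
rewrite IH ?eqFG ?leqnn ?addnS ?ltnS ?leq_addr // => k /andP[lt_ik lt_kN].
by apply: eqFG; rewrite (ltnW lt_ik) addnS /= -addSn.
Qed.

Lemma path_sum N (u v : 'I_n -> R) (M : nat -> 'M[R]_n) i :
  \sum_(x : {ffun 'I_N.+1 -> 'I_n}) u (x (inord 0)) *
     (\prod_(k < N) M (i + k)%N (x (inord k)) (x (inord k.+1))) * v (x (inord N))
  = \sum_s u s * chain (fun k => mxapp (M k)) i N v s.
Proof.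
elim: N u i => [|N IH] u i; rewrite sum_ffun_cons; apply: eq_bigr => s _.
  by rewrite (sum_ffun_nil _ [ffun j => s]) big_ord0 mulr1 /= ffun_cons0.
rewrite /= {1}/mxapp -(IH (M i s) i.+1) mulr_sumr; apply: eq_bigr => y _.
rewrite ffun_cons0 big_ord_recl !ffun_consS // addn0 !mulrA; congr (_ * _ * _).
  by rewrite ffun_cons0.
apply: eq_bigr => k _; rewrite lift0 !ffun_consS ?addSnnS //.
- by rewrite ltnS.
- exact: ltn_trans (ltn_ord k) (ltnSn N).
Qed.

Lemma mxapp_mul (M N : 'M[R]_n) v : mxapp (M *m N) v = mxapp M (mxapp N v).
Proof.
apply: funext => s; rewrite /mxapp.
under eq_bigr do rewrite mxE mulr_suml.
rewrite exchange_big /=; apply: eq_bigr => k _.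
by rewrite mulr_sumr; apply: eq_bigr => s' _; rewrite mulrA.
Qed.

Lemma mxapp1 v : mxapp 1 v = v.
Proof.
apply: funext => s; rewrite /mxapp (bigD1 s) //= mxE eqxx mul1r big1 ?addr0 //.
by move=> s' ne_s's; rewrite mxE eq_sym (negbTE ne_s's) mul0r.
Qed.

Lemma iter_mxapp l (M : 'M[R]_n) v : iter l (mxapp M) v = mxapp (M ^+ l) v.
Proof.
elim: l => [|l IH] /=; first by rewrite expr0 mxapp1.
by rewrite IH exprS -mulmxE mxapp_mul.
Qed.

End PathSums.

Section Bounds.
Variables (R : numDomainType) (n : nat).

Lemma mxapp_bound (M : 'M[R]_n) v c B s : 0 <= B ->
  \sum_s' `|M s s'| <= c -> (forall s, `|v s| <= B) -> `|mxapp M v s| <= c * B.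
Proof.
move=> B_ge0 Mc vB; apply: le_trans (ler_norm_sum _ _ _) _.
apply: (@le_trans _ _ (\sum_s' `|M s s'| * B)); last by rewrite -mulr_suml ler_wpM2r.
by apply: ler_sum => s' _; rewrite normrM ler_wpM2l.
Qed.

Lemma distr_mean_bound (p : 'I_n -> R) v B :
  (forall s, 0 <= p s) -> \sum_s p s = 1 -> (forall s, `|v s| <= B) ->
  `|\sum_s p s * v s| <= B.
Proof.
move=> p_ge0 p_sum vB; apply: le_trans (ler_norm_sum _ _ _) _.
apply: (@le_trans _ _ (\sum_s p s * B)); last by rewrite -mulr_suml p_sum mul1r.
by apply: ler_sum => s _; rewrite normrM ger0_norm // ler_wpM2l.
Qed.

End Bounds.

Lemma centered_mxapp_bound (R : realType) n (M : 'M[R]_n) (pi w : 'I_n -> R) B s :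
  \sum_s pi s * w s = 0 -> (forall s, `|w s| <= B) ->
  `|mxapp M w s| <= 2 * B * dTV (fun s' => M s s') pi.
Proof.
move=> w_mean0 wB.
have -> : mxapp M w s = \sum_s' (M s s' - pi s') * w s'.
  by rewrite /mxapp; under [RHS]eq_bigr do rewrite mulrBl; rewrite sumrB w_mean0 subr0.
rewrite /dTV [2 * B]mulrC -mulrA [2 * _]mulrA mulfV ?mul1r ?pnatr_eq0 //.
apply: le_trans (ler_norm_sum _ _ _) _.
rewrite mulr_sumr; apply: ler_sum => s' _.
by rewrite normrM mulrC; apply: ler_wpM2r.
Qed.

Section Stochastic.
Variables (R : realType) (n : nat) (P : 'M[R]_n).
Hypothesis P_ge0 : forall s s', 0 <= P s s'.
Hypothesis P_row : forall s, \sum_s' P s s' = 1.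

Lemma stochastic_row_norm s : \sum_s' `|P s s'| <= 1.
Proof. by under eq_bigr do rewrite ger0_norm //; rewrite P_row. Qed.

Lemma iter_stochastic_const l : iter l (mxapp P) (fun _ => 1) = (fun _ => 1).
Proof.
elim: l => //= l ->; apply: funext => s.
by rewrite /mxapp; under eq_bigr do rewrite mulr1; rewrite P_row.
Qed.

Lemma iter_stochastic_bound l v B : 0 <= B -> (forall s, `|v s| <= B) ->
  forall s, `|iter l (mxapp P) v s| <= B.
Proof.
move=> B_ge0; elim: l => //= l IH vB s; rewrite -[B]mul1r.
by apply: mxapp_bound => //; [apply: stochastic_row_norm | apply: IH].
Qed.

(* For 0 <= gamma < 1 the resolvent matrix 1 - gamma P is invertible: a row
   vector v with v = gamma v P has l1-norm at most gamma times itself. *)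
Lemma resolvent_unit gamma : 0 <= gamma < 1 -> 1%:M - gamma *: P \in unitmx.
Proof.
case/andP=> g_ge0 g_lt1; rewrite -row_free_unit; apply: inj_row_free => v vM0.
have v_fix : v = gamma *: (v *m P).
  by apply/eqP; rewrite -subr_eq0 -vM0 mulmxBr mulmx1 -scalemxAr.
have l1_contr : \sum_s' `|v 0 s'| <= gamma * \sum_s' `|v 0 s'|.
  rewrite {1}v_fix; apply: (@le_trans _ _ (\sum_s' gamma * \sum_s `|v 0 s| * P s s')).
    apply: ler_sum => s' _; rewrite !mxE normrM ger0_norm // ler_wpM2l //.
    apply: le_trans (ler_norm_sum _ _ _) _.
    by apply: ler_sum => s _; rewrite normrM (ger0_norm (P_ge0 _ _)).
  rewrite -mulr_sumr ler_wpM2l // exchange_big /=.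
  by apply: ler_sum => s _; rewrite -mulr_sumr P_row mulr1.
have l1_0 : \sum_s' `|v 0 s'| = 0.
  apply/eqP; rewrite eq_le sumr_ge0 ?andbT //.
  have : (1 - gamma) * \sum_s' `|v 0 s'| <= 0 by rewrite mulrBl mul1r subr_le0.
  by rewrite pmulr_rle0 // subr_gt0.
apply/matrixP => i s'; rewrite ord1 mxE.
by apply/normr0_eq0; apply: (psumr_eq0P _ l1_0).
Qed.

Variable pi : 'I_n -> R.
Hypothesis pi_stat : stationary P pi.

Lemma pi_mean_iter l v : \sum_s pi s * iter l (mxapp P) v s = \sum_s pi s * v s.
Proof.
elim: l => //= l <-; rewrite /mxapp; under eq_bigr do rewrite mulr_sumr.
rewrite exchange_big /=; apply: eq_bigr => s' _.
rewrite -(proj2 pi_stat s') mulr_suml; apply: eq_bigr => s _.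
by rewrite mulrA.
Qed.

Lemma stationary_resolvent gamma : 0 <= gamma < 1 ->
  (\row_s pi s) *m invmx (1%:M - gamma *: P) = (1 - gamma)^-1 *: \row_s pi s.
Proof.
move=> g01; have g_neq1 : 1 - gamma != 0.
  by case/andP: g01 => _ g_lt1; rewrite subr_eq0 eq_sym (lt_eqF g_lt1).
have piP : (\row_s pi s) *m P = \row_s pi s.
  apply/matrixP => i s'; rewrite !mxE -(proj2 pi_stat s').
  by apply: eq_bigr => s _; rewrite mxE.
have piM : (\row_s pi s) *m (1%:M - gamma *: P) = (1 - gamma) *: \row_s pi s.
  by rewrite mulmxBr mulmx1 -scalemxAr piP scalerBl scale1r.
rewrite -{1}[\row_s pi s](scalerK g_neq1) -piM -scalemxAl.
by rewrite (mulmxK (resolvent_unit g01)).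
Qed.

End Stochastic.

Section Trajectories.
Variables (R : realType) (n : nat) (A : finType).
Variables (pi : 'I_n -> R) (mu : 'I_n -> A -> R) (Pm : 'I_n -> A -> 'I_n -> R).

Definition weighted_mx (phi : 'I_n -> A -> 'I_n -> R) : 'M[R]_n :=
  \matrix_(s, s') \sum_(a : A) mu s a * Pm s a s' * phi s a s'.

Lemma weighted_mx_ext phi psi :
  (forall s a s', phi s a s' = psi s a s') -> weighted_mx phi = weighted_mx psi.
Proof. by move=> eq_phi; apply/matrixP => s s'; rewrite !mxE; under eq_bigr do rewrite eq_phi. Qed.

Lemma weighted_mx1 : weighted_mx (fun _ _ _ => 1) = trans_mx mu Pm.
Proof. by apply/matrixP => s s'; rewrite !mxE; under eq_bigr do rewrite mulr1. Qed.

Lemma traj_expect_prod t (phi : nat -> 'I_n -> A -> 'I_n -> R) :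
  \sum_(w : traj n A t) traj_prob pi mu Pm w *
      \prod_(k < t.+1) phi k (st w k) (ac w k) (st w k.+1)
  = \sum_s pi s * chain (fun k => mxapp (weighted_mx (phi k))) 0 t.+1 (fun _ => 1) s.
Proof.
rewrite -(path_sum t.+1 pi (fun _ => 1) (fun k => weighted_mx (phi k)) 0).
rewrite -[LHS](pair_bigA _ (fun x y => traj_prob pi mu Pm (x, y) *
   \prod_(k < t.+1) phi k (st (x, y) k) (ac (x, y) k) (st (x, y) k.+1))) /=.
apply: eq_bigr => x _; rewrite /traj_prob /st /ac /= mulr1.
under eq_bigr do rewrite -mulrA -big_split /=.
rewrite -mulr_sumr; congr (_ * _).
set G := fun (k : 'I_t.+1) (a : A) => mu (x (inord k)) a *
  Pm (x (inord k)) a (x (inord k.+1)) * phi k (x (inord k)) a (x (inord k.+1)).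
rewrite (eq_bigr (fun y : {ffun 'I_t.+1 -> A} => \prod_(k < t.+1) G k (y k))); last first.
  by move=> y _; apply: eq_bigr => k _; rewrite /G inord_val.
by rewrite -(bigA_distr_bigA G); apply: eq_bigr => k _; rewrite mxE add0n.
Qed.

End Trajectories.

Lemma count_close (j tau N : nat) :
  (\sum_(k < N) ((k <= j + tau) && (j <= k + tau)) <= 2 * tau + 1)%N.
Proof.
suff : (\sum_(k < N) ((k <= j + tau) && (j <= k + tau)) <= minn N (j + tau).+1 - (j - tau))%N.
  by move=> /leq_trans; apply; lia.
elim: N => [|N IH]; first by rewrite big_ord0.
rewrite big_ord_recr /=; move: IH; set S := \sum_(i < N) _.
by case: (boolP ((N <= j + tau) && (j <= N + tau))%N) => [/andP[] | _] /=; lia.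
Qed.

Section RewardProcess.
Variables (R : realType) (n : nat) (A : finType).
Variables (pi : 'I_n -> R) (mu : 'I_n -> A -> R) (Pm : 'I_n -> A -> 'I_n -> R).
Hypothesis mu_ge0 : forall s a, 0 <= mu s a.
Hypothesis mu_sum : forall s, \sum_(a : A) mu s a = 1.
Hypothesis Pm_ge0 : forall s a s', 0 <= Pm s a s'.
Hypothesis Pm_sum : forall s a, \sum_(s' < n) Pm s a s' = 1.
Hypothesis pi_stat : stationary (trans_mx mu Pm) pi.

Local Notation P := (trans_mx mu Pm).
Local Notation Mw := (weighted_mx mu Pm).

Lemma trans_mx_ge0 s s' : 0 <= P s s'.
Proof. by rewrite mxE; apply: sumr_ge0 => a _; apply: mulr_ge0. Qed.

Lemma trans_mx_row s : \sum_s' P s s' = 1.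
Proof.
under eq_bigr do rewrite mxE.
rewrite exchange_big /= -(mu_sum s); apply: eq_bigr => a _.
by rewrite -mulr_sumr Pm_sum mulr1.
Qed.

Lemma weighted_mx_row_norm phi c : (forall s a s', `|phi s a s'| <= c) ->
  forall s, \sum_s' `|Mw phi s s'| <= c.
Proof.
move=> phi_c s.
have -> : c = \sum_s' \sum_a mu s a * Pm s a s' * c.
  rewrite exchange_big /= -[LHS]mul1r -(mu_sum s) mulr_suml; apply: eq_bigr => a _.
  by rewrite -mulr_suml -mulr_sumr Pm_sum mulr1.
apply: ler_sum => s' _; rewrite mxE; apply: le_trans (ler_norm_sum _ _ _) _.
apply: ler_sum => a _; rewrite normrM ger0_norm ?mulr_ge0 //.
by apply: ler_wpM2l; [apply: mulr_ge0 | apply: phi_c].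
Qed.

Variables (r : 'I_n -> A -> 'I_n -> R) (rmax : R).
Hypothesis r_bound : forall s a s', `|r s a s'| <= rmax.
Hypothesis rmax_ge0 : 0 <= rmax.

Definition mean_reward : R := \sum_s pi s * rew_vec mu Pm r s 0.
Definition centered_rew s a s' : R := r s a s' - mean_reward.

Lemma mean_rewardE : mean_reward = \sum_s pi s * mxapp (Mw r) (fun _ => 1) s.
Proof.
apply: eq_bigr => s _; congr (_ * _); rewrite /mxapp mxE; apply: eq_bigr => s' _.
by rewrite mxE mulr1.
Qed.

Lemma centered_rew_bound s a s' : `|centered_rew s a s'| <= 2 * rmax.
Proof.
have a0_bound : `|mean_reward| <= rmax.
  rewrite mean_rewardE; apply: distr_mean_bound; try by case: (proj1 pi_stat).
  move=> s0; rewrite -[rmax]mulr1; apply: mxapp_bound => //.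
    exact: weighted_mx_row_norm.
  by move=> _; rewrite normr1.
by apply: le_trans (ler_normB _ _) _; rewrite mulr_natl mulr2n lerD.
Qed.

(* The one-step drift of the centered reward, w(s) = E[r_0 - a0 | s_0 = s];
   it has pi-mean zero. *)
Definition drift := mxapp (Mw centered_rew) (fun _ => 1).

Lemma pi_mean_drift : \sum_s pi s * drift s = 0.
Proof.
have driftE s : drift s = mxapp (Mw r) (fun _ => 1) s - mean_reward.
  rewrite /drift /mxapp.
  transitivity (\sum_s' (Mw r s s' - P s s' * mean_reward)).
    apply: eq_bigr => s' _; rewrite !mxE mulr1 mulr_suml -sumrB.
    by apply: eq_bigr => a _; rewrite mulrBr.
  by rewrite sumrB -mulr_suml trans_mx_row mul1r; under [in RHS]eq_bigr do rewrite mulr1.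
under eq_bigr do rewrite driftE mulrBr.
by rewrite sumrB -mean_rewardE -mulr_suml (proj2 (proj1 pi_stat)) mul1r subrr.
Qed.

Lemma drift_bound s : `|drift s| <= 2 * rmax.
Proof.
rewrite -[2 * rmax]mulr1; apply: mxapp_bound => //.
  exact: (weighted_mx_row_norm centered_rew_bound s).
by move=> _; rewrite normr1.
Qed.

Definition cross_moment t (j k : 'I_t.+1) : R :=
  \sum_(w : traj n A t) traj_prob pi mu Pm w *
     ((obs_rew r w j - mean_reward) * (obs_rew r w k - mean_reward)).

Definition pair_weight (j k i : nat) : 'I_n -> A -> 'I_n -> R :=
  fun s a s' => (if i == j then centered_rew s a s' else 1) *
                (if i == k then centered_rew s a s' else 1).
Definition pair_op j k i := mxapp (Mw (pair_weight j k i)).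

Lemma cross_moment_chain t (j k : 'I_t.+1) :
  cross_moment j k = \sum_s pi s * chain (pair_op j k) 0 t.+1 (fun _ => 1) s.
Proof.
rewrite -traj_expect_prod; apply: eq_bigr => w _; congr (_ * _).
rewrite /pair_weight big_split /=.
congr (_ * _); [rewrite (bigD1 j) | rewrite (bigD1 k)] => //=;
  by rewrite eqxx big1 ?mulr1 // => i ?; rewrite ifN.
Qed.

Lemma pair_op_other j k i : i != j -> i != k -> pair_op j k i = mxapp P.
Proof.
move=> /negPf ij /negPf ik; rewrite /pair_op -weighted_mx1.
by congr mxapp; apply: weighted_mx_ext => s a s'; rewrite /pair_weight ij ik mulr1.
Qed.

Lemma pair_op_single j k i : j != k -> (i == j) || (i == k) ->
  pair_op j k i = mxapp (Mw centered_rew).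
Proof.
move=> /negPf jk /orP[/eqP-> | /eqP->]; congr mxapp; apply: weighted_mx_ext => s a s';
  by rewrite /pair_weight eqxx ?jk 1?eq_sym ?jk ?mulr1 ?mul1r.
Qed.

Lemma pair_op_diag j :
  pair_op j j j = mxapp (Mw (fun s a s' => centered_rew s a s' * centered_rew s a s')).
Proof. by congr mxapp; apply: weighted_mx_ext => s a s'; rewrite /pair_weight eqxx. Qed.

Lemma cross_moment_diag t (j : 'I_t.+1) : cross_moment j j =
  \sum_s pi s * mxapp (Mw (fun s a s' => centered_rew s a s' * centered_rew s a s'))
                      (fun _ => 1) s.
Proof.
rewrite cross_moment_chain; move: (nat_of_ord j) (ltn_ord j) => {}j lt_jt.
have before x : chain (pair_op j j) 0 j x = iter j (mxapp P) x.
  by apply: chain_const => i /andP[_ lt_ij]; apply: pair_op_other; rewrite ltn_eqF.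
have after : chain (pair_op j j) j.+1 (t - j) (fun _ => 1) = (fun _ => 1).
  rewrite (chain_const (G := mxapp P)) ?iter_stochastic_const //.
  - exact: trans_mx_row.
  - by move=> i /andP[lt_ji _]; apply: pair_op_other; rewrite gtn_eqF.
have -> : t.+1 = (j + (t - j).+1)%N by lia.
by rewrite chain_split add0n before pi_mean_iter //= after pair_op_diag.
Qed.

Lemma cross_moment_lt t (j k : 'I_t.+1) : (j < k)%N ->
  cross_moment j k = \sum_s pi s * mxapp (Mw centered_rew) (iter (k - j.+1) (mxapp P) drift) s.
Proof.
rewrite cross_moment_chain; move: (nat_of_ord j) (nat_of_ord k) (ltn_ord k) => {}j {}k.
move=> lt_kt lt_jk; have ne_jk : j != k by rewrite ltn_eqF.
have before x : chain (pair_op j k) 0 j x = iter j (mxapp P) x.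
  apply: chain_const => i /andP[_ lt_ij].
  by apply: pair_op_other; rewrite ltn_eqF // (ltn_trans lt_ij).
have between x : chain (pair_op j k) j.+1 (k - j.+1) x = iter (k - j.+1) (mxapp P) x.
  apply: chain_const => i /andP[lt_ji lt_ik].
  have lt_ik' : (i < k)%N by lia.
  by apply: pair_op_other; [rewrite gtn_eqF | rewrite ltn_eqF].
have after : chain (pair_op j k) k.+1 (t - k) (fun _ => 1) = (fun _ => 1).
  rewrite (chain_const (G := mxapp P)) ?iter_stochastic_const //.
  - exact: trans_mx_row.
  - move=> i /andP[lt_ki _].
    by apply: pair_op_other; rewrite gtn_eqF // (ltn_trans lt_jk).
have -> : t.+1 = (j + ((k - j.+1) + (t - k).+1).+1)%N by lia.
rewrite chain_split add0n before pi_mean_iter //= chain_split between.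
have -> : (j.+1 + (k - j.+1))%N = k by lia.
by rewrite /= after !pair_op_single ?eqxx ?orbT.
Qed.

Lemma mean_valueE gamma : 0 <= gamma < 1 ->
  mean_value pi mu Pm r gamma = mean_reward / (1 - gamma).
Proof.
move=> g01; rewrite /mean_value /value_fun.
have -> : \sum_s pi s * (invmx (1%:M - gamma *: P) *m rew_vec mu Pm r) s 0
   = ((\row_s pi s) *m invmx (1%:M - gamma *: P) *m rew_vec mu Pm r) 0 0.
  by rewrite -mulmxA [RHS]mxE; apply: eq_bigr => s _; rewrite [(\row_s pi s) _ _]mxE.
rewrite (stationary_resolvent trans_mx_ge0 trans_mx_row pi_stat g01).
rewrite -scalemxAl mxE mulrC; congr (_ * _).
by rewrite mxE; apply: eq_bigr => s _; rewrite mxE.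
Qed.

Lemma mse_cross_moments t gamma : 0 <= gamma < 1 ->
  mse t pi mu Pm r gamma =
  ((t.+1%:R * (1 - gamma))^-1) ^+ 2 * \sum_(j < t.+1) \sum_(k < t.+1) cross_moment j k.
Proof.
move=> g01; have g_neq1 : 1 - gamma != 0.
  by case/andP: g01 => _ g_lt1; rewrite subr_eq0 eq_sym (lt_eqF g_lt1).
rewrite /mse mean_valueE //.
set c := (t.+1%:R * (1 - gamma))^-1.
have errorE (w : traj n A t) : Vhat r gamma w - mean_reward / (1 - gamma) =
    c * \sum_(k < t.+1) (obs_rew r w k - mean_reward).
  rewrite /Vhat /run_avg sumrB sumr_const card_ord -mulr_natl /c.
  by field; rewrite g_neq1 addrC natr1 pnatr_eq0.
transitivity (\sum_(w : traj n A t) c ^+ 2 * \sum_(j < t.+1) \sum_(k < t.+1)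
    traj_prob pi mu Pm w * ((obs_rew r w j - mean_reward) * (obs_rew r w k - mean_reward))).
  apply: eq_bigr => w _; rewrite errorE exprMn mulrCA; congr (_ * _).
  by rewrite expr2 mulr_suml mulr_sumr; apply: eq_bigr => j _; rewrite !mulr_sumr.
rewrite -mulr_sumr exchange_big; congr (_ * _); apply: eq_bigr => j _.
by rewrite exchange_big.
Qed.

Lemma centered_op_mean_bound v B : 0 <= B -> (forall s, `|v s| <= B) ->
  `|\sum_s pi s * mxapp (Mw centered_rew) v s| <= 2 * rmax * B.
Proof.
move=> B_ge0 vB; apply: distr_mean_bound; try by case: (proj1 pi_stat).
move=> s; apply: mxapp_bound => //.
exact: (weighted_mx_row_norm centered_rew_bound s).
Qed.

Lemma cross_moment_diag_bound t (j : 'I_t.+1) : `|cross_moment j j| <= 4 * rmax ^+ 2.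
Proof.
rewrite cross_moment_diag; apply: distr_mean_bound; try by case: (proj1 pi_stat).
move=> s; have -> : 4 * rmax ^+ 2 = (2 * rmax * (2 * rmax)) * 1 by ring.
apply: mxapp_bound => //; last by move=> _; rewrite normr1.
apply: weighted_mx_row_norm => s0 a s'; rewrite normrM.
by apply: ler_pM; rewrite ?normr_ge0 ?centered_rew_bound.
Qed.

Variables (m rho eps : R) (tau : nat).
Hypothesis m_gt0 : 0 < m.
Hypothesis rho01 : 0 <= rho <= 1.
Hypothesis mixing : geom_mixing P pi m rho.
Hypothesis tau_mixed : m * rho ^+ tau <= eps.

Lemma mixed_after l : (tau <= l)%N -> m * rho ^+ l <= eps.
Proof.
case/andP: rho01 => rho_ge0 rho_le1 le_tau_l; apply: le_trans tau_mixed.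
rewrite ler_wpM2l ?(ltW m_gt0) // -(subnKC le_tau_l) exprD ler_piMr ?exprn_ge0 //.
exact: exprn_ile1.
Qed.

Lemma eps_ge0 : 0 <= eps.
Proof.
case/andP: rho01 => rho_ge0 _; apply: le_trans tau_mixed.
by rewrite mulr_ge0 ?exprn_ge0 // ltW.
Qed.

Definition close (j k : nat) : R := ((k <= j + tau) && (j <= k + tau))%N%:R.

(* Covariance decay for j < k: close pairs have cross moment O(rmax^2), pairs
   further apart than tau have O(rmax^2 eps), since P^(k-j-1) w is then
   eps-small by mixing. *)
Lemma cross_moment_lt_bound t (j k : 'I_t.+1) : (j < k)%N ->
  `|cross_moment j k| <= 8 * rmax ^+ 2 * (close j k + eps).
Proof.
move=> lt_jk; rewrite cross_moment_lt //.
have eps0 := eps_ge0; have close_ge0 : 0 <= close j k by rewrite ler0n.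
have rmax2_ge0 : 0 <= rmax ^+ 2 by rewrite exprn_ge0.
case: (ltnP (k - j.+1) tau) => [near | far].
  have -> : close j k = 1 by rewrite /close; apply/eqP; rewrite pnatr_eq1 eqb1; apply/andP; lia.
  have driftB s : `|iter (k - j.+1) (mxapp P) drift s| <= 2 * rmax.
    apply: (iter_stochastic_bound trans_mx_ge0 trans_mx_row); last exact: drift_bound.
    by rewrite mulr_ge0.
  apply: le_trans (centered_op_mean_bound _ driftB) _; first by rewrite mulr_ge0.
  by nra.
apply: le_trans (centered_op_mean_bound (B := 4 * rmax * eps) _ _) _.
- by rewrite !mulr_ge0.
- move=> s; rewrite iter_mxapp.
  apply: le_trans (centered_mxapp_bound _ s pi_mean_drift drift_bound) _.
  have -> : 4 * rmax * eps = 2 * (2 * rmax) * eps by ring.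
  by rewrite ler_wpM2l ?mulr_ge0 //; apply: le_trans (mixing _ _) (mixed_after far).
- by nra.
Qed.

Lemma cross_moment_bound t (j k : 'I_t.+1) :
  `|cross_moment j k| <= 8 * rmax ^+ 2 * (close j k + eps).
Proof.
case: (ltngtP j k) => [lt_jk | lt_kj | /val_inj <-].
- exact: cross_moment_lt_bound.
- have -> : cross_moment j k = cross_moment k j.
    by apply: eq_bigr => w _; rewrite [_ * (_ - _)]mulrC.
  by rewrite /close andbC; apply: cross_moment_lt_bound.
- apply: le_trans (cross_moment_diag_bound j) _.
  have -> : close j j = 1 by rewrite /close !leq_addr.
  have : 0 <= rmax ^+ 2 * eps by rewrite mulr_ge0 ?exprn_ge0 ?eps_ge0.
  by nra.
Qed.

(* Summing: close pairs contribute O(rmax^2) each, at most (2 tau + 1)(t + 1)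
   of them; every pair contributes O(rmax^2 eps). *)
Lemma sum_cross_moment_bound t : \sum_(j < t.+1) \sum_(k < t.+1) cross_moment j k <=
   8 * rmax ^+ 2 * (t.+1%:R * ((2 * tau + 1)%N%:R + t.+1%:R * eps)).
Proof.
have rmax2_ge0 : 0 <= 8 * rmax ^+ 2 by rewrite mulr_ge0 ?exprn_ge0.
apply: (@le_trans _ _ (\sum_(j < t.+1) \sum_(k < t.+1) 8 * rmax ^+ 2 * (close j k + eps))).
  by do 2![apply: ler_sum => ? _]; apply: le_trans (ler_norm _) (cross_moment_bound _ _).
apply: (@le_trans _ _ (\sum_(j < t.+1)
    8 * rmax ^+ 2 * ((2 * tau + 1)%N%:R + t.+1%:R * eps))); last first.
  by rewrite sumr_const card_ord -[_ *+ t.+1]mulr_natl mulrCA.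
apply: ler_sum => j _; rewrite -mulr_sumr ler_wpM2l // big_split /= lerD //.
  by rewrite -natr_sum ler_nat count_close.
by rewrite sumr_const card_ord mulr_natl.
Qed.

End RewardProcess.

Lemma bernoulli_ineq (R : realDomainType) (d : R) (T : nat) :
  0 <= d -> 1 + T%:R * d <= (1 + d) ^+ T.
Proof.
move=> d_ge0; elim: T => [|T IH]; first by rewrite mul0r addr0 expr0.
rewrite exprS -natr1.
have : 0 <= T%:R * d by rewrite mulr_ge0.
have : 0 <= (1 + d) ^+ T by rewrite exprn_ge0 // addr_ge0.
by nra.
Qed.

Lemma tau_mix_spec (R : realType) (m rho eps : R) : 0 < m -> 0 < rho < 1 -> 0 < eps ->
  (1 <= tau_mix m rho eps)%N /\ m * rho ^+ tau_mix m rho eps <= eps.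
Proof.
move=> m_gt0 /andP[rho_gt0 rho_lt1] eps_gt0.
suff ex_tau : exists t : nat, `[< (1 <= t)%N /\ m * rho ^+ t <= eps >].
  by rewrite /tau_mix; case: pselect => [h | []] //; case: ex_minnP => T /asboolP.
pose d := rho^-1 - 1.
have d_gt0 : 0 < d by rewrite subr_gt0 invf_gt1.
have q_ge0 : 0 <= m / (eps * d) by rewrite divr_ge0 ?mulr_ge0 ?ltW.
pose T := (Num.Def.archi_bound (m / (eps * d))).+1.
exists T; apply/asboolP; split => //.
have lt_qT : m / (eps * d) < T%:R.
  by apply: lt_le_trans (archi_boundP q_ge0) _; rewrite ler_nat.
have rhoT : rho ^+ T = ((1 + d) ^+ T)^-1 by rewrite addrC subrK exprVn invrK.
have powT_gt0 : 0 < (1 + d) ^+ T by rewrite exprn_gt0 // addr_gt0.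
rewrite rhoT ler_pdivrMr //.
have lt_m : m < eps * d * T%:R by rewrite mulrC -ltr_pdivrMr // mulr_gt0.
have := bernoulli_ineq T (ltW d_gt0).
have : 0 <= eps * d * T%:R by rewrite !mulr_ge0 // ltW.
by nra.
Qed.

Lemma reward_bound_ge0 (R : realType) n (A : finType) (mu : 'I_n -> A -> R)
    (pi : 'I_n -> R) (r : 'I_n -> A -> 'I_n -> R) rmax :
  is_distr pi -> (forall s, \sum_(a : A) mu s a = 1) ->
  (forall s a s', `|r s a s'| <= rmax) -> 0 <= rmax.
Proof.
case: n mu pi r => [|n] mu pi r [_ pi_sum] mu_sum r_bound.
  by move: pi_sum; rewrite big_ord0 => /eqP; rewrite eq_sym oner_eq0.
case: (pickP (@predT A)) => [a _ | noA].
  exact: le_trans (normr_ge0 _) (r_bound ord0 a ord0).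
by move: (mu_sum ord0); rewrite big_pred0 // => /eqP; rewrite eq_sym oner_eq0.
Qed.

Lemma mse_rate (R : realFieldType) (p g : R) (tau t : nat) :
  0 <= p -> 0 < g -> (1 <= tau)%N -> (0 < t)%N ->
  ((t.+1%:R * g)^-1) ^+ 2 *
    (8 * p * (t.+1%:R * ((2 * tau + 1)%N%:R + t.+1%:R * (2 * t.+1%:R)^-1)))
  <= 32%:R * (p * tau%:R) / (g ^+ 2 * t%:R).
Proof.
move=> p_ge0 g_gt0 tau_ge1 t_gt0.
have t_pos : 0 < t%:R :> R by rewrite ltr0n.
have t1_pos : 0 < t.+1%:R :> R by rewrite ltr0n.
have tau_ge1R : 1 <= tau%:R :> R by rewrite ler1n.
have -> : ((t.+1%:R * g)^-1) ^+ 2 *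
    (8 * p * (t.+1%:R * ((2 * tau + 1)%N%:R + t.+1%:R * (2 * t.+1%:R)^-1)))
  = 8 * p * (2 * tau%:R + 3 / 2) / (t.+1%:R * g ^+ 2).
  rewrite natrD natrM; field.
  by rewrite (gt_eqF g_gt0) addrC natr1 (gt_eqF t1_pos).
rewrite ler_pdivrMr; last by rewrite mulr_gt0 // exprn_gt0.
have -> : 32%:R * (p * tau%:R) / (g ^+ 2 * t%:R) * (t.+1%:R * g ^+ 2) =
   32 * p * tau%:R * t.+1%:R / t%:R.
  by field; rewrite (gt_eqF g_gt0) (gt_eqF t_pos).
rewrite ler_pdivlMr // -natr1.
have : 0 <= p * (tau%:R * t%:R - t%:R).
  by rewrite mulr_ge0 // subr_ge0 ler_peMl // ltW.
have : 0 <= p * tau%:R by rewrite mulr_ge0 // (le_trans ler01).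
have : 0 <= p * t%:R by rewrite mulr_ge0 // ltW.
by nra.
Qed.

Theorem lemma3 :
  exists C : nat, forall (R : realType) (n : nat) (A : finType)
    (mu : 'I_n -> A -> R) (Pm : 'I_n -> A -> 'I_n -> R)
    (r : 'I_n -> A -> 'I_n -> R) (rmax gamma : R) (pi : 'I_n -> R) (m rho : R)
    (t0 : nat),
    (forall s a, 0 <= mu s a) -> (forall s, \sum_(a : A) mu s a = 1) ->
    (forall s a s', 0 <= Pm s a s') -> (forall s a, \sum_(s' < n) Pm s a s' = 1) ->
    irreducible (trans_mx mu Pm) -> aperiodic (trans_mx mu Pm) ->
    stationary (trans_mx mu Pm) pi ->
    (forall s a s', `|r s a s'| <= rmax) ->
    0 < gamma < 1 ->
    0 < m -> 0 < rho < 1 -> geom_mixing (trans_mx mu Pm) pi m rho ->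
    (* t0 = the largest integer with t0 <= 2 tau^mix(1/(2(t0+1))) *)
    (t0 <= 2 * tau_mix m rho (2 * t0.+1%:R)^-1)%N ->
    (forall t', (t' <= 2 * tau_mix m rho (2 * t'.+1%:R)^-1)%N -> (t' <= t0)%N) ->
    forall t : nat, (t0 < t)%N ->
      mse t pi mu Pm r gamma <=
        C%:R * (rmax ^+ 2 * (tau_mix m rho (2 * t.+1%:R)^-1)%:R)
          / ((1 - gamma) ^+ 2 * t%:R).
Proof.
exists 32%N => R n A mu Pm r rmax gamma pi m rho t0 mu_ge0 mu_sum Pm_ge0 Pm_sum _ _
  pi_stat r_bound /andP[g_gt0 g_lt1] m_gt0 rho01 mixing _ _ t lt_t0t.
have rmax_ge0 := reward_bound_ge0 (proj1 pi_stat) mu_sum r_bound.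
have eps_gt0 : 0 < (2 * t.+1%:R)^-1 :> R by rewrite invr_gt0 mulr_gt0 ?ltr0n.
have [tau_ge1 tau_mixed] := tau_mix_spec m_gt0 rho01 eps_gt0.
have g01 : 0 <= gamma < 1 by rewrite ltW.
rewrite (mse_cross_moments mu_ge0 mu_sum Pm_ge0 Pm_sum pi_stat r t g01).
have rho_in01 : 0 <= rho <= 1 by case/andP: rho01 => *; rewrite !ltW.
apply: le_trans (ler_wpM2l (exprn_ge0 2 _)
  (sum_cross_moment_bound mu_ge0 mu_sum Pm_ge0 Pm_sum pi_stat r_bound rmax_ge0
     m_gt0 rho_in01 mixing tau_mixed t)) _.
  by rewrite invr_ge0 mulr_ge0 ?subr_ge0 ?ltW.
apply: mse_rate => //; first by rewrite exprn_ge0.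
- by rewrite subr_gt0.
- exact: leq_ltn_trans (leq0n t0) lt_t0t.
Qed.
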